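(* Let $G_1$ be a finite additive group of order $v$ with a subgroup $H$ of order $h$. If there exists a $(G_1,H,k,1)$-BRDF and a nested $(h,k,1)$-BIBD, then there exists a nested $(v,k,1)$-BIBD.
   Context: A $(G,H,k,\lambda)$-RDF is a collection of $k$-subsets of $G$ (base blocks) whose differences $x-y$ ($x\ne y$ in a common base block) cover every element of $G\setminus H$ exactly $\lambda$ times and no element of $H$; it is a BRDF if moreover all base blocks are disjoint from $H$ and the base blocks and their negatives are pairwise disjoint. A $(v,k,\lambda)$-BIBD is a set $X$ of $v$ points with a multiset $\mathcal{A}$ of $k$-subsets such that every pair of distinct points lies in exactly $\lambda$ blocks (partial: at most $\lambda$); it is nested if there is $\phi:\mathcal{A}\to X$ such that $\{A\cup\{\phi(A)\}:A\in\mathcal{A}\}$ is the block multiset of a partial $(v,k+1,\lambda+1)$-BIBD on $X$ (in particular $\phi(A)\notin A$). *)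

From HB Require Import structures.
From mathcomp Require Import all_boot all_order all_algebra all_fingroup.
Set Implicit Arguments. Unset Strict Implicit. Unset Printing Implicit Defensive.
Import GRing.Theory.
Local Open Scope ring_scope.

Definition diff_count (G : finZmodType) (B : {set G}) (g : G) : nat :=
  #|[set p : G * G | [&& p.1 \in B, p.2 \in B, p.1 != p.2 & p.1 - p.2 == g]]|.

Definition total_diff (G : finZmodType) (F : seq {set G}) (g : G) : nat :=
  (\sum_(B <- F) diff_count B g)%N.

Definition is_rdf (G : finZmodType) (H : {set G}) (k lam : nat)
    (F : seq {set G}) : Prop :=
  (forall B, B \in F -> #|B| = k) /\
  (forall g : G, total_diff F g = (if g \in H then 0 else lam)%N).

Definition negset (G : finZmodType) (B : {set G}) : {set G} :=
  [set - x | x in B].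

Definition is_brdf (G : finZmodType) (H : {set G}) (k lam : nat)
    (F : seq {set G}) : Prop :=
  is_rdf H k lam F /\
  (forall B, B \in F -> [disjoint B & H]) /\
  (let L := F ++ map (@negset G) F in
   forall i j : nat, (i < size L)%N -> (j < size L)%N -> i != j ->
     [disjoint nth set0 L i & nth set0 L j]).

Definition is_partial_bibd (X : finType) (v k lam : nat) (Bs : seq {set X}) : Prop :=
  #|X| = v /\ (forall A, A \in Bs -> #|A| = k) /\
  (forall x y : X, x != y -> (count (fun A : {set X} => (x \in A) && (y \in A)) Bs <= lam)%N).

Definition is_bibd (X : finType) (v k lam : nat) (Bs : seq {set X}) : Prop :=
  #|X| = v /\ (forall A, A \in Bs -> #|A| = k) /\
  (forall x y : X, x != y -> count (fun A : {set X} => (x \in A) && (y \in A)) Bs = lam).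

(* nested: phi assigns to each block (by position) a point phi(A) not in A,
   and the blocks A ∪ {phi(A)} form a partial (v,k+1,lam+1)-BIBD. *)
Definition is_nested_bibd (X : finType) (v k lam : nat) (Bs : seq {set X}) : Prop :=
  is_bibd v k lam Bs /\
  exists phi : seq X, size phi = size Bs /\
    (forall p, p \in zip Bs phi -> p.2 \notin p.1) /\
    is_partial_bibd v k.+1 lam.+1 [seq p.2 |: p.1 | p <- zip Bs phi].

(* The nested (v,k,1)-BIBD lives on G1. Its blocks are the translates B + t of
   the base blocks of the BRDF, nested by the point t (0 is not in B since B
   avoids H), together with a copy of the given nested (h,k,1)-BIBD on every
   coset H + t, transported along a bijection from its point set onto H.
   A pair {x, y} with x - y outside H lies in exactly one translate, by the RDF
   property, and in no coset copy; a pair with x - y in H lies in no translate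
   and in exactly one block of the copy on its coset. The nested block
   (0 ∪ B) + t adds the pairs {t, t + b} (b in B), of differences ±b; as the
   sets B and -B are pairwise disjoint and avoid H, each difference outside H
   arises at most once this way, so every pair lies in at most two nested
   blocks. *)

From HB Require Import structures.
From mathcomp Require Import all_boot all_order all_algebra all_fingroup.
Set Implicit Arguments. Unset Strict Implicit. Unset Printing Implicit Defensive.
Import GRing.Theory.
Local Open Scope ring_scope.

Lemma count_sumE (T : Type) (a : pred T) (s : seq T) :
  count a s = (\sum_(x <- s) a x)%N.
Proof. by elim: s => [|x s IH]; rewrite ?big_nil ?big_cons //= IH. Qed.

Lemma sum_bool_card (T : finType) (A : {pred T}) (P : pred T) :
  (\sum_(t in A) P t)%N = #|[set t in A | P t]|.
Proof.
rewrite -sum1dep_card big_mkcondr /=; apply: eq_bigr => t _.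
by case: (P t).
Qed.

Lemma card_setU1I_le (T : finType) (a : T) (A C : {set T}) :
  (#|(a |: A) :&: C| <= (a \in C) + #|A :&: C|)%N.
Proof.
rewrite setIUl; apply: leq_trans (leq_card_setU _ _) _; rewrite leq_add2r.
have [aC|aNC] := boolP (a \in C).
  by rewrite /= -(cards1 a) subset_leq_card // subsetIl.
rewrite leqn0 cards_eq0; apply/eqP/setP => z; rewrite !inE.
by apply/negbTE; apply: contra aNC => /andP[/eqP <-].
Qed.

Lemma count_mem_pairwise_disjoint (T : finType) (L : seq {set T}) (x : T) :
  pairwise (fun A B : {set T} => [disjoint A & B]) L ->
  (count (fun A : {set T} => x \in A) L <= 1)%N.
Proof.
elim: L => //= A L IH /andP[A_disj /IH L_le1].
have [xA|_] := boolP (x \in A); last by rewrite add0n.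
rewrite add1n ltnS leqn0; apply/eqP.
rewrite (eq_in_count (a2 := pred0)) ?count_pred0 // => B /(allP A_disj) AB /=.
exact: disjointFr AB xA.
Qed.

Definition pair_count (X : finType) (Bs : seq {set X}) (x y : X) : nat :=
  count (fun A : {set X} => (x \in A) && (y \in A)) Bs.

Section PairCount.

Variable X : finType.
Implicit Types (Bs : seq {set X}) (x y : X).

Lemma pair_count_cat Bs Cs x y :
  pair_count (Bs ++ Cs) x y = (pair_count Bs x y + pair_count Cs x y)%N.
Proof. exact: count_cat. Qed.

Lemma pair_count_allpairs (I J : Type) (B : I -> J -> {set X}) s t x y :
  pair_count [seq B i j | i <- s, j <- t] x y =
  (\sum_(i <- s) pair_count [seq B i j | j <- t] x y)%N.
Proof.
elim: s => [|i s IH]; first by rewrite big_nil.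
by rewrite allpairs_cons pair_count_cat IH big_cons.
Qed.

Variables (Y : finType) (e : X -> Y).
Hypothesis e_inj : injective e.

Lemma pair_count_imset Bs (a b : X) :
  pair_count [seq e @: A | A : {set X} <- Bs] (e a) (e b) = pair_count Bs a b.
Proof.
by rewrite /pair_count count_map; apply: eq_count => A /=; rewrite !mem_imset.
Qed.

Lemma pair_count_imset_out Bs (x y : Y) :
  ~~ ((x \in codom e) && (y \in codom e)) ->
  pair_count [seq e @: A | A : {set X} <- Bs] x y = 0%N.
Proof.
move=> out; rewrite /pair_count count_map (@eq_count _ _ pred0) ?count_pred0 //.
move=> A /=; apply/negbTE; apply: contra out.
by case/andP=> /imsetP[a _ ->] /imsetP[b _ ->]; rewrite !codom_f.
Qed.

Lemma pair_count_imset_eq Bs lam :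
  (forall a b : X, a != b -> pair_count Bs a b = lam) ->
  forall x y : Y, x != y ->
  pair_count [seq e @: A | A : {set X} <- Bs] x y =
    (((x \in codom e) && (y \in codom e)) * lam)%N.
Proof.
move=> Bs_lam x y xy.
have [/andP[xe ye]|out] := boolP (_ && _); last by rewrite pair_count_imset_out.
case/codomP: xe xy => a ->; case/codomP: ye => b -> ab.
by rewrite mul1n pair_count_imset Bs_lam //; apply: contraNneq ab => ->.
Qed.

Lemma pair_count_imset_le Bs lam :
  (forall a b : X, a != b -> pair_count Bs a b <= lam)%N ->
  forall x y : Y, x != y ->
  (pair_count [seq e @: A | A : {set X} <- Bs] x y <=
    ((x \in codom e) && (y \in codom e)) * lam)%N.
Proof.
move=> Bs_lam x y xy.
have [/andP[xe ye]|out] := boolP (_ && _); last by rewrite pair_count_imset_out.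
case/codomP: xe xy => a ->; case/codomP: ye => b -> ab.
by rewrite mul1n pair_count_imset Bs_lam //; apply: contraNneq ab => ->.
Qed.

End PairCount.

Section Translation.

Variable G : finZmodType.
Implicit Types (B : {set G}) (Bs : seq {set G}) (x y t : G).

Definition translate B t : {set G} := [set a + t | a in B].

Lemma mem_translate B t x : (x \in translate B t) = (x - t \in B).
Proof.
apply/imsetP/idP => [[a aB ->]|xtB]; first by rewrite addrK.
by exists (x - t); rewrite ?subrK.
Qed.

Lemma card_translate B t : #|translate B t| = #|B|.
Proof. exact/card_imset/addIr. Qed.

Lemma translateU1 a B t : translate (a |: B) t = (a + t) |: translate B t.
Proof. exact: imsetU1. Qed.

Lemma pair_count_translate Bs t x y :
  pair_count [seq translate B t | B <- Bs] x y = pair_count Bs (x - t) (y - t).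
Proof.
by rewrite /pair_count count_map; apply: eq_count => B /=; rewrite !mem_translate.
Qed.

Lemma diff_countE B d :
  diff_count B d = if d == 0 then 0%N else #|B :&: translate B d|.
Proof.
rewrite /diff_count; have [-> | d0] := eqVneq d 0.
  apply/eqP; rewrite cards_eq0; apply/eqP/setP => p.
  by rewrite !inE subr_eq0 andNb !andbF.
rewrite -(card_imset _ (_ : injective (fun a => (a, a - d)))); last by move=> a b [].
apply: eq_card => -[a b]; rewrite [LHS]inE /=; apply/idP/imsetP.
  case/and4P=> aB bB _ /eqP <-; exists a; last by rewrite subKr.
  by rewrite inE mem_translate subKr aB bB.
case=> c; rewrite inE mem_translate => /andP[cB cdB] [-> ->].
by rewrite cB cdB -subr_eq0 subKr d0 /=.
Qed.

Lemma card_translates_mem2 B x y : x != y ->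
  #|[set t | (x \in translate B t) && (y \in translate B t)]| = diff_count B (x - y).
Proof.
move=> xy; rewrite diff_countE subr_eq0 (negbTE xy).
rewrite -(card_imset _ (_ : injective (fun t => x - t))); last first.
  by move=> t s /addrI /oppr_inj.
apply: eq_card => a; rewrite [RHS]inE mem_translate; apply/imsetP/andP.
  case=> t; rewrite inE !mem_translate => /andP[xt yt] ->.
  by split=> //; rewrite opprB addrC subrKA.
case=> aB ayB; exists (x - a); last by rewrite subKr.
by rewrite inE !mem_translate subKr aB opprB addrCA -opprB.
Qed.

Lemma pair_count_all_translates Bs x y : x != y ->
  pair_count [seq translate B t | t <- enum G, B <- Bs] x y = total_diff Bs (x - y).
Proof.
move=> xy; rewrite pair_count_allpairs /total_diff.
under eq_bigr do rewrite pair_count_translate /pair_count count_sumE.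
rewrite exchange_big /=; apply: eq_bigr => B _.
rewrite big_enum sum_bool_card -card_translates_mem2 //.
by apply: eq_card => t; rewrite !inE !mem_translate.
Qed.

Lemma diff_count_setU1_0 B d :
  (diff_count (0%R |: B) d <= diff_count B d + (d \in B) + (- d \in B)%R)%N.
Proof.
rewrite !diff_countE; have [//|d0] := eqVneq d 0.
rewrite translateU1 add0r (leq_trans (card_setU1I_le _ _ _)) //.
have -> : (0 \in d |: translate B d) = (- d \in B).
  by rewrite !inE mem_translate sub0r eq_sym (negbTE d0).
rewrite addnC leq_add2r setIC (leq_trans (card_setU1I_le _ _ _)) //.
by rewrite addnC setIC.
Qed.

End Translation.

Definition nested_blocks (X : finType) (P : seq ({set X} * X)) : seq {set X} :=
  [seq p.2 |: p.1 | p <- P].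

Lemma unzip1_cat (S T : Type) (s1 s2 : seq (S * T)) :
  unzip1 (s1 ++ s2) = unzip1 s1 ++ unzip1 s2.
Proof. exact: map_cat. Qed.

Lemma nested_blocks_cat (X : finType) (P Q : seq ({set X} * X)) :
  nested_blocks (P ++ Q) = nested_blocks P ++ nested_blocks Q.
Proof. exact: map_cat. Qed.

Section TranslatePairs.

Variable G : finZmodType.
Implicit Types (S : seq G) (P : seq ({set G} * G)).

Definition translate_pairs S P : seq ({set G} * G) :=
  [seq (translate p.1 t, p.2 + t) | t <- S, p <- P].

Lemma unzip1_translate_pairs S P :
  unzip1 (translate_pairs S P) = [seq translate B t | t <- S, B <- unzip1 P].
Proof. by rewrite /unzip1 map_allpairs allpairs_mapr. Qed.

Lemma nested_blocks_translate_pairs S P :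
  nested_blocks (translate_pairs S P) =
    [seq translate B t | t <- S, B <- nested_blocks P].
Proof.
rewrite /nested_blocks map_allpairs allpairs_mapr.
by apply: eq_allpairs => t p; rewrite translateU1.
Qed.

Lemma translate_pairs_blocks S P k :
  (forall p, p \in P -> #|p.1| = k /\ p.2 \notin p.1) ->
  forall p, p \in translate_pairs S P -> #|p.1| = k /\ p.2 \notin p.1.
Proof.
move=> P_blocks _ /allpairsP[[t q] [_ qP ->]] /=.
by rewrite card_translate mem_translate addrK; apply: P_blocks.
Qed.

End TranslatePairs.

Lemma mem_negset (G : finZmodType) (B : {set G}) x : (x \in negset B) = (- x \in B).
Proof.
apply/imsetP/idP => [[a aB ->]|xB]; first by rewrite opprK.
by exists (- x); rewrite ?opprK.
Qed.

Section Development.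

Variables (G : finZmodType) (H : {group G}) (k : nat) (F : seq {set G}).
Hypothesis F_brdf : is_brdf H k 1 F.

Definition development : seq ({set G} * G) :=
  translate_pairs (enum G) [seq (B, 0) | B <- F].

Lemma development_blocks p : p \in development -> #|p.1| = k /\ p.2 \notin p.1.
Proof.
have [[F_k _] [F_H _]] := F_brdf.
apply: translate_pairs_blocks => _ /mapP[B BF ->] /=; split; first exact: F_k.
by rewrite (disjointFl (F_H B BF) (group1 H)).
Qed.

Lemma pair_count_brdf_development x y : x != y ->
  pair_count (unzip1 development) x y = if x - y \in H then 0%N else 1%N.
Proof.
move=> xy; have [[_ F_diff] _] := F_brdf.
rewrite unzip1_translate_pairs.
have -> : unzip1 [seq (B, 0 : G) | B <- F] = F by rewrite /unzip1 -map_comp map_id.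
by rewrite pair_count_all_translates // F_diff.
Qed.

Lemma brdf_sum_diff_count_setU1_0 d :
  (\sum_(B <- F) diff_count (0%R |: B) d <= if d \in H then 0 else 2)%N.
Proof.
have [[_ F_diff] [F_H F_disj]] := F_brdf.
apply: (@leq_trans (\sum_(B <- F) (diff_count B d + (d \in B) + ((- d)%R \in B)))%N).
  by apply: leq_sum => B _; apply: diff_count_setU1_0.
rewrite !big_split /= -!count_sumE -/(total_diff F d) F_diff.
have -> : count (fun B : {set G} => - d \in B) F =
          count (fun B : {set G} => d \in B) (map (@negset G) F).
  by rewrite count_map; apply: eq_count => B; rewrite /= mem_negset.
rewrite -addnA -count_cat; case: ifP => dH.
  rewrite add0n leqn0 -(count_pred0 (F ++ map (@negset G) F)).
  apply/eqP/eq_in_count.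
  move=> B; rewrite mem_cat => /orP[BF | /mapP[C CF ->]] /=.
    exact: disjointFl (F_H B BF) dH.
  by rewrite mem_negset (disjointFl (F_H C CF) (groupVr dH)).
rewrite add1n ltnS count_mem_pairwise_disjoint //.
apply/(pairwiseP set0) => i j il jl ij; apply: F_disj il jl _.
by rewrite ltn_eqF.
Qed.

Lemma pair_count_nested_development x y : x != y ->
  (pair_count (nested_blocks development) x y <= if (x - y)%R \in H then 0 else 2)%N.
Proof.
move=> xy; rewrite nested_blocks_translate_pairs.
have -> : nested_blocks [seq (B, 0 : G) | B <- F] = [seq 0 |: B | B <- F].
  by rewrite /nested_blocks -map_comp.
rewrite pair_count_all_translates // /total_diff big_map.
exact: brdf_sum_diff_count_setU1_0.
Qed.

End Development.

Section CosetCopies.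

Variables (G : finZmodType) (H : {group G}).

Definition coset_reps : {set G} := transversal (rcosets H [set: G]) [set: G].

Lemma mem_rcoset_sub (x t : G) : (t \in H :* x)%g = (x - t \in H).
Proof. by rewrite mem_rcoset -groupV invMg invgK. Qed.

Lemma card_coset_reps_mem2 (x y : G) :
  #|[set t in coset_reps | (x - t \in H) && (y - t \in H)]| = (x - y \in H).
Proof.
rewrite -mem_rcoset_sub; have [Hyx|nHyx] := @rcoset_eqP _ H y x.
  have /and3P[_ _ /forall_inP one_rep] :=
    transversalP (rcosets_partition (subsetT H)).
  have -> : [set t in coset_reps | (x - t \in H) && (y - t \in H)] =
            coset_reps :&: (H :* x)%g.
    by apply/setP => t; rewrite !inE -!mem_rcoset_sub Hyx andbb.
  by apply/eqP/one_rep; rewrite -rcosetE imset_f.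
apply/eqP; rewrite cards_eq0; apply/eqP/setP => t; rewrite !inE -!mem_rcoset_sub.
apply/negbTE/andP => -[_ /andP[/rcoset_eqP tx /rcoset_eqP ty]].
by apply: nHyx; rewrite -ty tx.
Qed.

Variables (X : finType) (f : X -> G).
Hypotheses (f_inj : injective f) (f_H : codom f =i H).
Implicit Types (P : seq ({set X} * X)) (a b : X) (x y : G).

Definition coset_copies (P : seq ({set X} * X)) : seq ({set G} * G) :=
  translate_pairs (enum coset_reps) [seq (f @: p.1, f p.2) | p : {set X} * X <- P].

Lemma coset_copies_blocks P k :
  (forall p, p \in P -> #|p.1| = k /\ p.2 \notin p.1) ->
  forall p, p \in coset_copies P -> #|p.1| = k /\ p.2 \notin p.1.
Proof.
move=> P_blocks; apply: translate_pairs_blocks => _ /mapP[q qP ->] /=.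
by rewrite card_imset // mem_imset //; apply: P_blocks.
Qed.

Lemma pair_count_coset_copies P lam :
  (forall a b, a != b -> pair_count (unzip1 P) a b = lam) ->
  forall x y, x != y ->
  pair_count (unzip1 (coset_copies P)) x y = (((x - y)%R \in H) * lam)%N.
Proof.
move=> P_lam x y xy; rewrite unzip1_translate_pairs.
have -> : unzip1 [seq (f @: p.1, f p.2) | p : {set X} * X <- P] =
          [seq f @: A | A : {set X} <- unzip1 P] by rewrite /unzip1 -!map_comp.
rewrite pair_count_allpairs big_enum /= -card_coset_reps_mem2 -sum_bool_card.
rewrite big_distrl /=; apply: eq_bigr => t _; rewrite pair_count_translate.
by rewrite (pair_count_imset_eq f_inj P_lam) ?(inj_eq (addIr _)) // !f_H.
Qed.

Lemma pair_count_nested_coset_copies P lam :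
  (forall a b, a != b -> pair_count (nested_blocks P) a b <= lam)%N ->
  forall x y, x != y ->
  (pair_count (nested_blocks (coset_copies P)) x y <= ((x - y)%R \in H) * lam)%N.
Proof.
move=> P_lam x y xy; rewrite nested_blocks_translate_pairs.
have -> : nested_blocks [seq (f @: p.1, f p.2) | p : {set X} * X <- P] =
          [seq f @: A | A : {set X} <- nested_blocks P].
  by rewrite /nested_blocks -!map_comp; apply: eq_map => p /=; rewrite imsetU1.
rewrite pair_count_allpairs big_enum /= -card_coset_reps_mem2 -sum_bool_card.
rewrite big_distrl /=; apply: leq_sum => t _; rewrite pair_count_translate.
by rewrite -!f_H pair_count_imset_le ?(inj_eq (addIr _)).
Qed.

End CosetCopies.

Lemma nested_bibd_of_pairs (X : finType) v k lam (P : seq ({set X} * X)) :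
  #|X| = v ->
  (forall p, p \in P -> #|p.1| = k /\ p.2 \notin p.1) ->
  (forall x y, x != y -> pair_count (unzip1 P) x y = lam) ->
  (forall x y, x != y -> pair_count (nested_blocks P) x y <= lam.+1)%N ->
  is_nested_bibd v k lam (unzip1 P).
Proof.
move=> X_v P_blocks P_pairs P_nested.
split; first by split; [|split] => // _ /mapP[p /P_blocks[pk _] ->].
exists (unzip2 P); rewrite !size_map zip_unzip; split=> //; split.
  by move=> p /P_blocks[].
split=> //; split=> // _ /mapP[p /P_blocks[pk pA] ->].
by rewrite cardsU1 pA pk.
Qed.

Lemma exists_embedding (X T : finType) (D : {set T}) : #|X| = #|D| ->
  exists2 f : X -> T, injective f & codom f =i D.
Proof.
move=> X_D; pose f a := enum_val (cast_ord X_D (enum_rank a)).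
have f_inj : injective f.
  by move=> a b /enum_val_inj /cast_ord_inj /enum_rank_inj.
exists f => // z; apply/idP/idP => [/codomP[a ->]|zD]; first exact: enum_valP.
apply/codomP; exists (enum_val (cast_ord (esym X_D) (enum_rank_in zD z))).
by rewrite /f enum_valK cast_ordKV enum_rankK_in.
Qed.

Theorem mainTheorem15 (G1 : finZmodType) (H : {group G1}) (v h k : nat) :
  #|G1| = v -> #|H| = h ->
  (exists F : seq {set G1}, is_brdf H k 1 F) ->
  (exists (X : finType) (Bs : seq {set X}), is_nested_bibd h k 1 Bs) ->
  exists (X : finType) (Bs : seq {set X}), is_nested_bibd v k 1 Bs.
Proof.
move=> G1_v H_h [F F_brdf] [X [Bs [[X_h [Bs_k Bs_pairs]] nested]]].
have [phi [phi_size [phi_out [_ [_ nested_pairs]]]]] := nested.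
have [f f_inj f_H] := exists_embedding (etrans X_h (esym H_h)).
pose P := zip Bs phi.
have unzip1_P : unzip1 P = Bs by rewrite unzip1_zip ?phi_size.
have P_blocks p : p \in P -> #|p.1| = k /\ p.2 \notin p.1.
  by move=> pP; split; [apply: Bs_k; rewrite -unzip1_P map_f | apply: phi_out].
exists G1, (unzip1 (development F ++ coset_copies H f P)).
apply: nested_bibd_of_pairs => //.
- move=> p; rewrite mem_cat => /orP[/(development_blocks F_brdf) //|].
  exact: (coset_copies_blocks f_inj P_blocks).
- move=> x y xy; rewrite unzip1_cat pair_count_cat.
  rewrite (pair_count_brdf_development F_brdf) //.
  rewrite (pair_count_coset_copies f_inj f_H (lam := 1)) ?unzip1_P //.
  by case: (x - y \in H).
- move=> x y xy; rewrite nested_blocks_cat pair_count_cat.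
  apply: leq_trans (leq_add (pair_count_nested_development F_brdf xy)
    (pair_count_nested_coset_copies f_inj f_H (lam := 2) nested_pairs xy)) _.
  by case: (x - y \in H).
Qed.
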